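(* Let $s\ge 2$ and $n\ge 2$ be integers, and let \[f(x)=(x^{s}-1)^{n}-x^{n-1}(x^{s-1}-1)^{n},\qquad g(x)=x^{ns}-x^{ns-1}+x^{n-1}-1.\] If $\alpha\in\mathbb{C}$ is a root of $g(x)$, then $\alpha^{n}$ is a root of $f(x)$.
   Context: Here (after the substitution $x=1-q$) $f$ is, up to the factor $(x-1)^n$, the interesting factor of the chromatic polynomial of the theta-graph with $n$ paths of length $s$, and $g$ is the interesting factor of the chromatic polynomial of the generalised theta graph with paths of lengths $ns-n+1,\ldots,ns$. *)

From mathcomp Require Import all_boot all_order all_algebra all_field.
Set Implicit Arguments. Unset Strict Implicit. Unset Printing Implicit Defensive.
Import GRing.Theory.
Local Open Scope ring_scope.

Definition fpoly (s n : nat) : {poly algC} :=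
  ('X^s - 1) ^+ n - 'X^(n.-1) * ('X^(s.-1) - 1) ^+ n.

Definition gpoly (s n : nat) : {poly algC} :=
  'X^(n * s) - 'X^((n * s).-1) + 'X^(n.-1) - 1.

From mathcomp Require Import all_boot all_order all_algebra all_field.
From mathcomp Require Import ring.
Local Open Scope ring_scope.
Import GRing.Theory.

(* With [y = alpha ^+ n], the relation [g(alpha) = 0] says
   [y ^+ s - 1 = alpha ^+ n.-1 * (y ^+ s.-1 - 1)]; raising it to the [n]-th
   power and using [(alpha ^+ n.-1) ^+ n = y ^+ n.-1] gives [f(y) = 0]. *)

Lemma horner_fpoly (s n : nat) (y : algC) :
  (fpoly s n).[y] = (y ^+ s - 1) ^+ n - y ^+ n.-1 * (y ^+ s.-1 - 1) ^+ n.
Proof. by rewrite /fpoly !hornerE. Qed.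

Lemma horner_gpoly (s n : nat) (x : algC) :
  (gpoly s n).[x] = x ^+ (n * s) - x ^+ (n * s).-1 + x ^+ n.-1 - 1.
Proof. by rewrite /gpoly !hornerE. Qed.

Lemma gpoly_value_split (R : comNzRingType) (s n : nat) (x : R) :
    (0 < s)%N -> (0 < n)%N ->
  x ^+ (n * s) - x ^+ (n * s).-1 + x ^+ n.-1 - 1
    = (x ^+ n) ^+ s - 1 - x ^+ n.-1 * ((x ^+ n) ^+ s.-1 - 1).
Proof.
case: s => // t _; case: n => // m _.
rewrite -!exprM.
have -> : (m.+1 * t.+1 = (m + m.+1 * t).+1)%N by rewrite mulnS.
rewrite succnK exprS exprD.
(* Generalizing the powers keeps [ring] from normalizing the exponents. *)
by move: (x ^+ m) (x ^+ (m.+1 * t)) => a b; ring.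
Qed.

Lemma fpoly_value_pow_eq0 (R : comNzRingType) (s n : nat) (x : R) :
    (x ^+ n) ^+ s - 1 = x ^+ n.-1 * ((x ^+ n) ^+ s.-1 - 1) ->
  ((x ^+ n) ^+ s - 1) ^+ n - (x ^+ n) ^+ n.-1 * ((x ^+ n) ^+ s.-1 - 1) ^+ n = 0.
Proof. by move->; rewrite exprMn -!exprM mulnC subrr. Qed.

Theorem theorem6 (s n : nat) (hs : (2 <= s)%N) (hn : (2 <= n)%N) (alpha : algC) :
  root (gpoly s n) alpha -> root (fpoly s n) (alpha ^+ n).
Proof.
rewrite /root horner_gpoly gpoly_value_split ?(leq_trans _ hs) ?(leq_trans _ hn) //.
by rewrite subr_eq0 horner_fpoly => /eqP/fpoly_value_pow_eq0 ->.
Qed.
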